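(* Let $\mathcal{I}=\{(i\mid A_i): i\in[m]\}$ be an index coding instance. Then $\beta(\mathcal{I})\le\beta_{\text{FP-UMCD}}(\mathcal{I})$, where $$\beta_{\text{FP-UMCD}}(\mathcal{I})=\min\sum_{j\in[n]}\gamma_j\,\beta_{\text{UMCD}}(M_j),$$ the minimum being over all finite families of (possibly overlapping) subsets $M_1,\dots,M_n\subseteq[m]$ and weights $\gamma_j\in[0,1]$ such that $\sum_{j:\, i\in M_j}\gamma_j\ge1$ for every $i\in[m]$.
   Context: Index coding: messages $x_i\in\mathbb{F}_q^t$, $i\in[m]$; receiver $i$ wants $x_i$ and knows $\{x_j:j\in A_i\}$, $A_i\subseteq[m]\setminus\{i\}$. A $(t,r)$ index code is an encoder $\phi:\mathbb{F}_q^{mt}\to\mathbb{F}_q^r$ with decoders $\psi_i$ such that $\psi_i(\phi(x),(x_j)_{j\in A_i})=x_i$ for all messages and receivers; $\beta(\mathcal{I})$ is the infimum of $r/t$ over all $t$ and all $(t,r)$ index codes (over finite fields). The subinstance $M\subseteq[m]$ has receivers $M$ and side information $A_i\cap M$; $B_i$ is the complement of $A_i\cup\{i\}$ within the receiver set. For a $0/1$ matrix $\boldsymbol{G}$, $\boldsymbol{G}^L_{[k]}$ is the submatrix of the first $k$ rows and columns $L$; $\mathrm{mcm}$ is the maximum number of $1$-entries in distinct rows and columns (0 for no columns). UMCD algorithm: $N=$ all receivers, $k=0$; while $N\ne\emptyset$: $k\leftarrow k+1$; pick $w\in N$ minimizing $|A_w|$ (arbitrary tie-breaking); row $k$ of $\boldsymbol{G}$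 is the indicator of $\{w\}\cup A_w$; remove $w$ from $N$; remove every $i\in N$ with $\mathrm{mcm}(\boldsymbol{G}_{[k]}^{\{i\}\cup B_i})=\mathrm{mcm}(\boldsymbol{G}_{[k]}^{B_i})+1$; output $k$. $\beta_{\text{UMCD}}(M)$ is the output of (a fixed execution of) this algorithm on subinstance $M$. *)

From HB Require Import structures.
From mathcomp Require Import all_boot all_order all_algebra.
From mathcomp Require Import boolp classical_sets reals.
Set Implicit Arguments. Unset Strict Implicit. Unset Printing Implicit Defensive.
Import Order.TTheory GRing.Theory Num.Theory.

Section IndexCoding.
Variable m : nat.
Variable A : 'I_m -> {set 'I_m}.

Definition side_info (F : finFieldType) (t : nat)
  (x : {ffun 'I_m -> 'rV[F]_t}) (i : 'I_m) : {ffun 'I_m -> 'rV[F]_t} :=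
  [ffun j => if j \in A i then x j else 0%R].

Definition is_index_code (F : finFieldType) (t r : nat)
  (phi : {ffun 'I_m -> 'rV[F]_t} -> 'rV[F]_r) : Prop :=
  exists psi : 'I_m -> 'rV[F]_r -> {ffun 'I_m -> 'rV[F]_t} -> 'rV[F]_t,
    forall (x : {ffun 'I_m -> 'rV[F]_t}) (i : 'I_m),
      psi i (phi x) (side_info x i) = x i.

Definition code_rates (R : realType) : set R :=
  [set q | exists (F : finFieldType) (t r : nat)
             (phi : {ffun 'I_m -> 'rV[F]_t} -> 'rV[F]_r),
             [/\ (0 < t)%N, is_index_code phi & q = (r%:R / t%:R)%R]].

Definition beta (R : realType) : R := inf (@code_rates R).

(* A 0/1 matrix G with columns indexed by 'I_m is represented by the sequence
   of its rows, each row being the set of columns holding a 1. *)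

Definition matchable (rows : seq {set 'I_m}) (S : {set 'I_m}) : bool :=
  [exists f : {ffun 'I_m -> 'I_(size rows)},
     [forall c in S, forall c' in S, (f c == f c') ==> (c == c')]
     && [forall c in S, c \in nth finset.set0 rows (f c)]].

(* mcm(G^L): maximum number of 1-entries in distinct rows and columns of the
   submatrix with columns L (0 when L is empty) *)
Definition mcm (rows : seq {set 'I_m}) (L : {set 'I_m}) : nat :=
  \max_(S : {set 'I_m} | (S \subset L) && matchable rows S) #|S|.

Definition sideM (M : {set 'I_m}) (i : 'I_m) : {set 'I_m} := A i :&: M.
Definition Bset (M : {set 'I_m}) (i : 'I_m) : {set 'I_m} :=
  M :\: (sideM M i :|: [set i]).

Definition umcd_row (M : {set 'I_m}) (w : 'I_m) : {set 'I_m} :=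
  w |: sideM M w.

Definition umcd_next (M N : {set 'I_m}) (rows : seq {set 'I_m}) (w : 'I_m)
  : {set 'I_m} :=
  let rows' := rcons rows (umcd_row M w) in
  [set i in N :\ w |
     mcm rows' (i |: Bset M i) != (mcm rows' (Bset M i)).+1].

(* umcd_exec M N rows k : some execution of the while loop, started in state
   (N, G_[size rows] = rows), terminates with output k (arbitrary tie-breaking) *)
Inductive umcd_exec (M : {set 'I_m}) : {set 'I_m} -> seq {set 'I_m} -> nat -> Prop :=
| umcd_done rows : umcd_exec M finset.set0 rows (size rows)
| umcd_step (N : {set 'I_m}) (rows : seq {set 'I_m}) (w : 'I_m) (k : nat) :
    w \in N ->
    (forall v, v \in N -> #|sideM M w| <= #|sideM M v|)%N ->
    umcd_exec M (umcd_next M N rows w) (rcons rows (umcd_row M w)) k ->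
    umcd_exec M N rows k.

Definition umcd_output (M : {set 'I_m}) (k : nat) : Prop :=
  umcd_exec M M [::] k.

End IndexCoding.

(* For each subinstance M_j, replace the 1-entries of the UMCD
   matrix by generic elements of a large finite field; the result is a scalar
   linear index code of length k_j for M_j.  A receiver w picked by the
   algorithm reads x_w off its own row.  A receiver i removed by the mcm test
   after s rows can also decode: for generic matrices every column set
   matchable into the rows has full rank, so mcm(G^{i,B_i}) = mcm(G^{B_i}) + 1
   forbids column i from lying in the span of the columns B_i.  Generic values
   exist because each relevant minor is a nonzero polynomial in one variable,
   and a large field avoids all their roots.  Finally, about gamma_j * t copies
   of the code for M_j, each carrying one of t symbols of every message it
   serves, form a code for the whole instance with messages of length t and
   at most sum_j (gamma_j t + 1) k_j transmitted symbols; letting t grow gives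
   the bound. *)

From HB Require Import structures.
From mathcomp Require Import all_boot all_order all_algebra.
From mathcomp Require Import boolp classical_sets reals.
From mathcomp Require Import fingroup perm zify.
Import Order.TTheory GRing.Theory Num.Theory.

Lemma sum_pow2_lt {N} (b : 'I_N -> bool) : (\sum_(y < N) b y * 2 ^ y < 2 ^ N)%N.
Proof.
elim: N b => [|N IHN] b; first by rewrite big_ord0.
rewrite big_ord_recr /= expnS.
have := IHN (fun y => b (widen_ord (leqnSn N) y)).
case: (b ord_max) => /=; lia.
Qed.

Lemma sum_pow2_inj {N} (b c : 'I_N -> bool) :
  (\sum_(y < N) b y * 2 ^ y)%N = (\sum_(y < N) c y * 2 ^ y)%N -> b =1 c.
Proof.
elim: N b c => [|N IHN] b c; first by move=> _ [].
rewrite !big_ord_recr /=.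
set w := widen_ord (leqnSn N).
have lt_b : (\sum_(y < N) b (w y) * 2 ^ y < 2 ^ N)%N := sum_pow2_lt (b \o w).
have lt_c : (\sum_(y < N) c (w y) * 2 ^ y < 2 ^ N)%N := sum_pow2_lt (c \o w).
move=> eq_sum.
have eq_top : b ord_max = c ord_max.
  move: lt_b lt_c eq_sum; set sb := \sum_(_ < _) _; set sc := \sum_(_ < _) _.
  by case: (b ord_max); case: (c ord_max) => //=; lia.
move: eq_sum; rewrite eq_top => /addIn /IHN eq_low y.
have [y_top|y_low] := eqVneq (y : nat) N.
  by rewrite (_ : y = ord_max) //; apply: val_inj.
have y_lt : (y < N)%N by move: y_low (ltn_ord y); lia.
by have := eq_low (Ordinal y_lt); rewrite (_ : w _ = y) //; apply: val_inj.
Qed.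

Lemma sum_pow2_set_inj {N} (S T : {set 'I_N}) :
  (\sum_(y in S) 2 ^ y)%N = (\sum_(y in T) 2 ^ y)%N -> S = T.
Proof.
have bits (U : {set 'I_N}) : (\sum_(y in U) 2 ^ y = \sum_(y < N) (y \in U) * 2 ^ y)%N.
  by rewrite big_mkcond; apply: eq_bigr => y _; case: (y \in U); rewrite ?mul1n.
by rewrite !bits => /sum_pow2_inj eqST; apply/setP.
Qed.

Section FullRank.
Context {F : fieldType}.
Local Open Scope ring_scope.

Lemma full_rank_transversal {p n : nat} {K : 'M[F]_(p, n)} :
  \rank K = p -> exists2 phi : ('I_p -> 'I_n), injective phi & forall a, K a (phi a) != 0.
Proof.
move=> rkK; have fullKt : row_full K^T by rewrite /row_full mxrank_tr rkK.
set phi := fullrankfun fullKt.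
have [sg nz_sg] : exists sg : 'S_p, \prod_a (rowsub phi K^T) a (sg a) != 0.
  apply/existsP; move: (fullrowsub_unit fullKt).
  rewrite unitmxE unitfE /determinant; apply: contraNT => /existsPn nz.
  by apply/eqP/big1 => sg _; move/negPn/eqP: (nz sg) => ->; rewrite mulr0.
exists (phi \o (sg^-1)%g) => [|b]; first exact/inj_comp/perm_inj/fullrankfun_inj.
move/prodf_neq0: nz_sg => /(_ ((sg^-1)%g b) isT).
by rewrite !mxE permKV.
Qed.

Lemma rank_colsub_dependent {p m : nat} {H : 'M[F]_(p, m)} {i : 'I_m} {B : {set 'I_m}}
    {z : 'I_m -> F} {q : nat} {g : 'I_q -> 'I_m} :
  i \notin B -> z i != 0 -> (forall a, \sum_u H a u * z u = 0) ->
  (forall u, u \notin i |: B -> z u = 0) -> (forall b, g b \in i |: B) ->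
  (\rank (colsub g H) <= \rank (colsub (enum_val : 'I_#|B| -> 'I_m) H))%N.
Proof.
move=> iNB zi0 Hz z_out g_in.
pose T := \matrix_(c < #|B|, b < q)
  if g b == i then - z (enum_val c) / z i else (enum_val c == g b)%:R.
suff -> : colsub g H = colsub enum_val H *m T by apply: mxrankM_maxl.
apply/matrixP => a b; rewrite !mxE.
under eq_bigr do rewrite !mxE.
rewrite -(big_enum_val (fun u =>
  H a u * (if g b == i then - z u / z i else (u == g b)%:R))).
have [-> | gbNi] := eqVneq (g b) i.
  have split_i : \sum_u H a u * z u = H a i * z i + \sum_(u in B) H a u * z u.
    rewrite (bigD1 i) //=; congr (_ + _); rewrite big_mkcond [RHS]big_mkcond /=.
    apply: eq_bigr => u _; have [uB|uNB] := boolP (u \in B).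
      by rewrite ifT //; apply: contraNneq iNB => <-.
    have [-> // | uNi] := eqVneq u i.
    by rewrite z_out ?mulr0 // !inE negb_or uNi.
  have col_i : \sum_(u in B) H a u * z u = - (H a i * z i).
    by apply/eqP; rewrite -addr_eq0 addrC -split_i Hz.
  transitivity (- (\sum_(u in B) H a u * z u) / z i).
    by rewrite col_i opprK mulfK.
  by rewrite mulNr mulr_suml -sumrN; apply: eq_bigr => u _; rewrite mulrA mulrN mulNr.
have gbB : g b \in B by move: (g_in b); rewrite !inE (negbTE gbNi).
rewrite (bigD1 (g b)) //= eqxx mulr1 big1 ?addr0 // => u /andP [_ /negbTE ->].
by rewrite mulr0.
Qed.
End FullRank.

Section Matching.
Context {m : nat}.
Implicit Types (rows : seq {set 'I_m}) (S B L : {set 'I_m}).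

Definition matching rows S (f : {ffun 'I_m -> 'I_(size rows)}) : bool :=
  [forall c in S, forall c' in S, (f c == f c') ==> (c == c')]
  && [forall c in S, c \in nth finset.set0 rows (f c)].

Lemma matchingP rows S (f : {ffun 'I_m -> 'I_(size rows)}) :
  reflect ({in S &, injective f} /\
           forall c, c \in S -> c \in nth finset.set0 rows (f c))
          (matching rows S f).
Proof.
apply: (iffP andP) => [[/forall_inP f_inj /forall_inP f_in] | [f_inj f_in]].
  split=> [c c' cS c'S fcc' | //].
  by apply/eqP; move/forall_inP/(_ c' c'S): (f_inj c cS); rewrite fcc' eqxx.
split; apply/forall_inP => // c cS; apply/forall_inP => c' c'S.
by apply/implyP => /eqP /f_inj ->.
Qed.

Lemma mcm_ge {rows L S} (f : {ffun 'I_m -> 'I_(size rows)}) :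
  S \subset L -> matching rows S f -> (#|S| <= mcm rows L)%N.
Proof.
move=> SL mS; apply: (@leq_bigmax_cond _ (fun S => (S \subset L) && matchable rows S)).
by rewrite SL; apply/existsP; exists f.
Qed.

Lemma mcm_witness rows L : (0 < mcm rows L)%N ->
  exists S f, [/\ S \subset L, matching rows S f & #|S| = mcm rows L].
Proof.
rewrite /mcm; have [S0 S0L|noS] := pickP (fun S => (S \subset L) && matchable rows S).
  rewrite (@bigop.bigmax_eq_arg _ S0 _ (fun S => #|S|) S0L) => _.
  by case: arg_maxnP => //= S /andP [SL /existsP [f mS]] _; exists S, f.
by rewrite big_pred0.
Qed.

Lemma mcm_ge_transversal {rows B p} {g : 'I_p -> 'I_(size rows)} {phi : 'I_p -> 'I_m} :
  injective g -> injective phi ->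
  (forall a, phi a \in B /\ phi a \in nth finset.set0 rows (g a)) -> (p <= mcm rows B)%N.
Proof.
case: p g phi => // p g phi g_inj phi_inj phi_in.
pose f := [ffun u => if [pick a | phi a == u] is Some a then g a else g ord0].
have f_phi a : f (phi a) = g a.
  by rewrite ffunE; case: pickP => [a' /eqP /phi_inj -> // | /(_ a)]; rewrite eqxx.
have card_im : #|phi @: [set: 'I_p.+1]| = p.+1 by rewrite card_imset // cardsT card_ord.
rewrite -card_im; apply: (mcm_ge f).
  by apply/fintype.subsetP => _ /imsetP [a _ ->]; case: (phi_in a).
apply/matchingP; split=> [_ _ /imsetP [a _ ->] /imsetP [a' _ ->] | _ /imsetP [a _ ->]].
  by rewrite !f_phi => /g_inj ->.
by rewrite f_phi; case: (phi_in a).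
Qed.
End Matching.

Lemma prod_exp_if (R : comRingType) (I : finType) (P : pred I) (e : I -> nat) (x : R) :
  (\prod_i (if P i then x ^+ e i else 0) =
   if [forall i, P i] then x ^+ (\sum_i e i) else 0)%R.
Proof.
case: forallP => [allP | /forallP/forallPn [i /negbTE Pi]].
  by rewrite -prodrXr; apply: eq_bigr => i _; rewrite allP.
by rewrite (bigD1 i) //= Pi mul0r.
Qed.

Lemma row_major_index_lt {k m} (l : 'I_k) (u : 'I_m) : (l * m + u < k * m)%N.
Proof. by have := ltn_ord l; have := ltn_ord u; nia. Qed.

Lemma row_major_index_inj {m l l'} {u u' : 'I_m} :
  (l * m + u = l' * m + u')%N -> l = l' /\ u = u'.
Proof.
move=> eq_index; have m_gt0 : (0 < m)%N by apply: leq_ltn_trans (ltn_ord u).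
have := congr1 (divn^~ m) eq_index; have := congr1 (modn^~ m) eq_index.
rewrite /= !modnMDl !divnMDl // !modn_small // !divn_small // !addn0.
by move=> /val_inj.
Qed.

Section GenericMatrix.
Context {F : fieldType} {m : nat} (rows : seq {set 'I_m}).
Local Notation k := (size rows).
Implicit Types (S : {set 'I_m}) (f : {ffun 'I_m -> 'I_k}).
Local Open Scope ring_scope.

(* The exponents [2 ^ (l * m + u)] are distinct powers of two, so distinct
   permutations give distinct monomials in the Leibniz expansion of a square
   submatrix: see [perm_exponent_inj]. *)
Definition generic_mx (x : F) : 'M[F]_(k, m) :=
  \matrix_(l, u) if u \in nth finset.set0 rows l then x ^+ (2 ^ (l * m + u)) else 0.

Definition generic_submx (x : F) S f : 'M[F]_#|S| :=
  colsub enum_val (rowsub (f \o enum_val) (generic_mx x)).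

Definition generic_point (x : F) : Prop :=
  forall S f, matching rows S f -> \det (generic_submx x S f) != 0.

Definition perm_exponent S f (s : 'S_#|S|) : nat :=
  \sum_a 2 ^ (f (enum_val a) * m + enum_val (s a)).

Definition perm_supported S f (s : 'S_#|S|) : bool :=
  [forall a, enum_val (s a) \in nth finset.set0 rows (f (enum_val a))].

Definition det_poly S f : {poly F} :=
  \sum_(s : 'S_#|S|)
    ((-1) ^+ s * (perm_supported S f s)%:R) *: 'X^(perm_exponent S f s).

Lemma horner_det_poly x S f : (det_poly S f).[x] = \det (generic_submx x S f).
Proof.
rewrite horner_sum; apply: eq_bigr => s _; rewrite hornerZ hornerXn.
under [X in _ = _ * X]eq_bigr do rewrite !mxE.
rewrite prod_exp_if -mulrA; congr (_ * _).
by rewrite /perm_supported; case: [forall a, _]; rewrite ?mul1r ?mul0r.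
Qed.

Lemma perm_exponent_inj S f (s : 'S_#|S|) : matching rows S f ->
  perm_exponent S f s = perm_exponent S f 1%g -> s = 1%g.
Proof.
case/matchingP => f_inj _ eq_exp.
pose cell (s : 'S_#|S|) a := Ordinal (row_major_index_lt (f (enum_val a)) (enum_val (s a))).
have rows_inj (a a' : 'I_#|S|) : f (enum_val a) = f (enum_val a') -> a = a'.
  by move/(f_inj _ _ (enum_valP a) (enum_valP a'))/enum_val_inj.
have cell_eq s1 s2 a a' : cell s1 a = cell s2 a' ->
    a = a' /\ enum_val (s1 a) = enum_val (s2 a').
  by move/(congr1 val)/row_major_index_inj => [/val_inj/rows_inj].
have exp_cells s1 : perm_exponent S f s1 = (\sum_(y in cell s1 @: [set: _]) 2 ^ y)%N.
  rewrite big_imset => [|a a' _ _ /cell_eq [] //].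
  by apply: eq_bigl => a; rewrite inE.
move: eq_exp; rewrite !exp_cells => /sum_pow2_set_inj cells_eq.
apply/permP => a; rewrite perm1.
have : cell s a \in cell 1%g @: [set: _] by rewrite -cells_eq imset_f.
case/imsetP => a' _ /cell_eq [<-]; rewrite perm1; exact: enum_val_inj.
Qed.

Lemma det_poly_neq0 S f : matching rows S f -> det_poly S f != 0.
Proof.
move=> mf; apply/eqP => /(congr1 (fun p : {poly F} => p`_(perm_exponent S f 1%g))).
rewrite coef_sum (bigD1 1%g) //= big1 => [|s s_neq1].
  rewrite coef0 coefZ coefXn eqxx odd_perm1 expr0 mul1r mulr1 addr0.
  have -> : perm_supported S f 1%g.
    case/matchingP: mf => _ f_in; apply/forallP => a; rewrite perm1.
    exact/f_in/enum_valP.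
  by move/eqP; rewrite oner_eq0.
rewrite coefZ coefXn eq_sym; case: eqP => [/(perm_exponent_inj _ _ _ mf) s1|_].
  by rewrite s1 eqxx in s_neq1.
by rewrite mulr0.
Qed.

Lemma size_det_poly S f : (size (det_poly S f) <= (m * 2 ^ (k * m)).+1)%N.
Proof.
apply: leq_trans (size_sum _ _ _) _; apply/bigmax_leqP => s _.
apply: leq_trans (size_scale_leq _ _) _; rewrite size_polyXn ltnS.
apply: (@leq_trans (\sum_(a < #|S|) 2 ^ (k * m))%N).
  by apply: leq_sum => a _; rewrite leq_exp2l // ltnW // row_major_index_lt.
rewrite sum_nat_const card_ord leq_mul2r; apply/orP; right.
by rewrite -[X in (_ <= X)%N]card_ord max_card.
Qed.
End GenericMatrix.

Lemma exists_nonroot {F : finFieldType} {p : {poly F}} :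
  p != 0%R -> (size p <= #|F|)%N -> exists x, ~~ root p x.
Proof.
move=> p_neq0 size_p; apply/existsP; move: size_p.
apply: contraTT => /existsPn all_roots; rewrite -ltnNge cardE.
by apply: (max_poly_roots p_neq0) (enum_uniq _); apply/allP => x _; apply/negPn.
Qed.

Definition generic_bound (m k : nat) : nat :=
  (#|{: {set 'I_m} * {ffun 'I_m -> 'I_k}}| * (m * 2 ^ (k * m)).+1).+2.

Lemma exists_generic (F : finFieldType) m (rows : seq {set 'I_m}) :
  (generic_bound m (size rows) <= #|F|)%N ->
  exists2 x : F, x != 0%R & generic_point rows x.
Proof.
move=> F_large.
pose C := ({set 'I_m} * {ffun 'I_m -> 'I_(size rows)})%type.
pose P : {poly F} := ('X * \prod_(c : C | matching rows c.1 c.2) det_poly rows c.1 c.2)%R.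
have P_neq0 : P != 0%R.
  by rewrite mulf_neq0 ?polyX_eq0 //; apply/prodf_neq0 => c; apply: det_poly_neq0.
have size_P : (size P <= generic_bound m (size rows))%N.
  apply: leq_trans (size_polyMleq _ _) _; rewrite size_polyX /= ltnS.
  rewrite size_prod => [|c]; last exact: det_poly_neq0.
  apply: leq_trans (leq_subr _ _) _; rewrite ltnS.
  apply: (@leq_trans (\sum_(c : C | matching rows c.1 c.2) (m * 2 ^ (size rows * m)).+1)).
    by apply: leq_sum => c _; apply: size_det_poly.
  by rewrite sum_nat_const leq_mul2r max_card orbT.
have [x] := exists_nonroot P_neq0 (leq_trans size_P F_large).
rewrite /root hornerM hornerX horner_prod mulf_eq0 negb_or => /andP [x_neq0 /prodf_neq0 nz].
by exists x => // S f mf; rewrite -horner_det_poly; apply: (nz (S, f)).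
Qed.

Lemma size_take_leq {T : Type} (s : nat) (r : seq T) : (size (take s r) <= size r)%N.
Proof. by rewrite size_take_min geq_minr. Qed.

Lemma nth_take_widen {T : Type} (x0 : T) (s : nat) (r : seq T)
    (l : 'I_(size (take s r))) :
  nth x0 (take s r) l = nth x0 r (widen_ord (size_take_leq s r) l).
Proof.
by rewrite nth_take //; apply: leq_trans (ltn_ord l) _; rewrite size_take_min geq_minl.
Qed.

Section GenericRank.
Context {F : fieldType} {m : nat}.
Local Open Scope ring_scope.

Lemma generic_mx_take (rows : seq {set 'I_m}) (x : F) s (l : 'I_(size (take s rows))) u :
  generic_mx (take s rows) x l u = generic_mx rows x (widen_ord (size_take_leq s rows) l) u.
Proof. by rewrite !mxE nth_take_widen. Qed.

Lemma generic_point_take {rows : seq {set 'I_m}} {x : F} s :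
  generic_point rows x -> generic_point (take s rows) x.
Proof.
move=> gen S f mf; pose f' := [ffun c => widen_ord (size_take_leq s rows) (f c)].
have mf' : matching rows S f'.
  case/matchingP: mf => f_inj f_in; apply/matchingP; split=> [c c' cS c'S | c cS].
    by rewrite !ffunE => /(congr1 val) /= /val_inj; apply: f_inj.
  by rewrite ffunE -nth_take_widen; apply: f_in.
suff -> : generic_submx (take s rows) x S f = generic_submx rows x S f' by apply: gen.
by apply/matrixP => a b; rewrite !mxE /= ffunE nth_take_widen.
Qed.

Context {rows : seq {set 'I_m}} {x : F}.
Hypothesis gen : generic_point rows x.

Lemma generic_rank_step (i : 'I_m) (B : {set 'I_m}) (z : 'I_m -> F) :
  i \notin B -> mcm rows (i |: B) = (mcm rows B).+1 ->
  (forall l, \sum_u generic_mx rows x l u * z u = 0) ->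
  (forall u, u \notin i |: B -> z u = 0) -> z i = 0.
Proof.
(* If [z i != 0], column [i] is a combination of the columns [B], so the
   invertible submatrix of a maximum matching of [i |: B] yields a matching
   of the same size inside [B]. *)
move=> iNB mcm_step Gz z_out; apply/eqP; apply: contraT => zi_neq0.
have /mcm_witness [S [f [SiB mf cardS]]] : (0 < mcm rows (i |: B))%N by rewrite mcm_step.
pose H := rowsub (f \o (enum_val : 'I_#|S| -> 'I_m)) (generic_mx rows x).
have Hz a : \sum_u H a u * z u = 0 by under eq_bigr do rewrite mxE; apply: Gz.
have rk_S : \rank (colsub (enum_val : 'I_#|S| -> 'I_m) H) = #|S|.
  by apply: mxrank_unit; rewrite unitmxE unitfE; apply: gen.
have rk_B : \rank (colsub (enum_val : 'I_#|B| -> 'I_m) H) = #|S|.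
  apply/eqP; rewrite eqn_leq rank_leq_row -[X in (X <= _)%N]rk_S /=.
  apply: (rank_colsub_dependent iNB zi_neq0 Hz z_out) => b.
  exact: (fintype.subsetP SiB _ (enum_valP b)).
have [phi phi_inj phi_nz] := full_rank_transversal rk_B.
suff : (#|S| <= mcm rows B)%N by rewrite cardS mcm_step ltnn.
apply: (mcm_ge_transversal (g := f \o enum_val) (phi := enum_val \o phi)).
- case/matchingP: mf => f_inj _ a a' /f_inj.
  by move=> /(_ (enum_valP a) (enum_valP a')) /enum_val_inj.
- exact/inj_comp/phi_inj/enum_val_inj.
move=> a; split; first exact: enum_valP.
by move: (phi_nz a); rewrite !mxE; case: ifP; rewrite ?eqxx.
Qed.
End GenericRank.

Section UMCD.
Context {m : nat} (A : 'I_m -> {set 'I_m}).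

(* How receiver [i] left the set [N]: it was picked for row [s], or it passed
   the mcm test once [s] rows had been produced. *)
Definition umcd_resolved (M : {set 'I_m}) (rows : seq {set 'I_m}) (i : 'I_m) : Prop :=
  (exists2 s, (s < size rows)%N & nth finset.set0 rows s = umcd_row A M i) \/
  (exists2 s, (s <= size rows)%N &
     mcm (take s rows) (i |: Bset A M i) = (mcm (take s rows) (Bset A M i)).+1).

Lemma umcd_exec_resolved M N rows k : umcd_exec A M N rows k ->
  exists rows', [/\ size rows' = k, take (size rows) rows' = rows &
                  forall i, i \in N -> umcd_resolved M rows' i].
Proof.
elim=> {N rows k} [rows | N rows w k wN _ _ [rows' [size_rows' take_rows' resolved]]].
  by exists rows; split=> // [|i]; rewrite ?take_size ?inE.
set row := umcd_row A M w in take_rows' *.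
have le_rows : (size (rcons rows row) <= size rows')%N.
  by rewrite -take_rows' size_take_min geq_minr.
rewrite size_rcons in take_rows' le_rows.
exists rows'; split=> // [|i iN].
  by rewrite -(take_takel _ (leqnSn _)) take_rows' -cats1 take_size_cat.
have [-> | iNw] := eqVneq i w.
  left; exists (size rows) => //.
  by rewrite -(nth_take _ (ltnSn (size rows))) take_rows' nth_rcons ltnn eqxx.
have [i_next | iNnext] := boolP (i \in umcd_next A M N rows w); first exact: resolved.
right; exists (size rows).+1 => //; rewrite take_rows'.
by move: iNnext; rewrite inE in_setD1 iNw iN /= negbK => /eqP.
Qed.

(* Receiver [i] of the subinstance [M] can decode the scalar linear code
   [x |-> G x] iff no kernel vector of [G] supported on [M :\: A i] has a
   nonzero [i]-entry. *)
Definition linear_decodable {F : fieldType} {k : nat} (M : {set 'I_m})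
    (G : 'M[F]_(k, m)) : Prop :=
  forall i, i \in M -> forall z : 'I_m -> F,
    (forall l, \sum_u G l u * z u = 0)%R ->
    (forall u, u \in A i -> z u = 0%R) -> (forall u, u \notin M -> z u = 0%R) -> z i = 0%R.

Lemma umcd_linear_code M k : umcd_output A M k ->
  exists bound, forall F : finFieldType, (bound <= #|F|)%N ->
    exists G : 'M[F]_(k, m), linear_decodable M G.
Proof.
case/umcd_exec_resolved => rows [<- _ resolved].
exists (generic_bound m (size rows)) => F /exists_generic [x x_neq0 gen].
exists (generic_mx rows x) => i iM z Gz zA zM.
have [[s s_lt row_s] | [s s_le mcm_step]] := resolved i iM.
  have := Gz (Ordinal s_lt); rewrite (bigD1 i) //= big1 ?addr0 => [|u uNi].
    rewrite mxE /= row_s !inE eqxx /= => /eqP.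
    by rewrite mulf_eq0 expf_eq0 (negbTE x_neq0) andbF => /eqP.
  rewrite mxE /= row_s !inE (negbTE uNi) /=.
  by case: ifP => [/andP [uA _] | _]; rewrite ?mul0r // zA ?mulr0.
apply: (generic_rank_step (generic_point_take s gen) i (Bset A M i)).
- by rewrite !inE eqxx orbT.
- exact: mcm_step.
- by move=> l; under eq_bigr do rewrite generic_mx_take; apply: Gz.
move=> u; rewrite !inE negb_or => /andP [uNi].
have [uM | /zM //] := boolP (u \in M).
by rewrite (negbTE uNi) !andbT orbF negbK; apply: zA.
Qed.
End UMCD.

Lemma sum_tag_cond {I : finType} (T_ : I -> finType) (P : pred I) (w : I -> nat) :
  (\sum_(q : {i : I & T_ i} | P (tag q)) w (tag q) = \sum_(i | P i) #|T_ i| * w i)%N.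
Proof.
rewrite -(eq_bigl _ _ (fun q => andbT (P (tag q)))).
rewrite -(sig_big_dep P (fun i (_ : T_ i) => true) (fun i _ => w i)) /=.
by apply: eq_bigr => i _; rewrite sum_nat_const.
Qed.

Section Codes.
Context {m : nat} (A : 'I_m -> {set 'I_m}).

Lemma code_rate_of_separating {R : realType} {F : finFieldType} {t : nat} {T : finType}
    (Phi : {ffun 'I_m -> 'rV[F]_t} -> T -> F) :
  (0 < t)%N ->
  (forall x y i, (forall tau, Phi x tau = Phi y tau) ->
     (forall j, j \in A i -> x j = y j) -> x i = y i) ->
  code_rates A (#|T|%:R / t%:R : R)%R.
Proof.
move=> t_gt0 separating.
pose phi x : 'rV[F]_#|T| := (\row_b Phi x (enum_val b))%R.
exists F, t, #|T|, phi; split=> //.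
pose psi i c s : 'rV[F]_t :=
  if pselect (exists x, phi x = c /\ side_info A x i = s) is left ex
  then (projT1 (cid ex)) i else 0%R.
exists psi => x i; rewrite /psi; case: pselect => [ex | []]; last by exists x.
case: (cid ex) => y /= [phi_yx side_yx]; apply: separating => [tau | j jA].
  have := congr1 (fun r : 'rV[F]_#|T| => r ord0 (enum_rank tau)) phi_yx.
  by rewrite !mxE enum_rankK.
by have := congr1 (fun s : {ffun 'I_m -> 'rV[F]_t} => s j) side_yx; rewrite !ffunE jA.
Qed.

Section FractionalCode.
Context {F : finFieldType} {n : nat} {M : 'I_n -> {set 'I_m}} {k a : 'I_n -> nat}.
Context {G : forall j, 'M[F]_(k j, m)} {t : nat}.
Hypothesis G_decodable : forall j, linear_decodable A (M j) (G j).
Hypothesis t_gt0 : (0 < t)%N.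
Hypothesis a_cover : forall i, (t <= \sum_(j | i \in M j) a j)%N.

Local Notation copy := {j : 'I_n & 'I_(a j)}.
Local Notation slot := {q : copy & 'I_(k (tag q))}.

Definition copies_of (i : 'I_m) : {set copy} := [set q | i \in M (tag q)].

(* The [d]-th symbol of message [u] travels in the [d]-th copy containing [u];
   the remaining copies carry nothing of [u]. *)
Definition symbol (u : 'I_m) (q : copy) (x : {ffun 'I_m -> 'rV[F]_t}) : F :=
  if insub (index q (enum (copies_of u))) is Some d then x u ord0 d else 0%R.

Definition fractional_encoder (x : {ffun 'I_m -> 'rV[F]_t}) (tau : slot) : F :=
  (\sum_u G (tag (tag tau)) (tagged tau) u * symbol u (tag tau) x)%R.

Lemma card_copies_of i : #|copies_of i| = (\sum_(j | i \in M j) a j)%N.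
Proof.
rewrite cardsE -sum1_card (sum_tag_cond _ (fun j => i \in M j) (fun _ => 1%N)).
by apply: eq_bigr => j _; rewrite card_ord muln1.
Qed.

Lemma card_slots : #|{: slot}| = (\sum_j a j * k j)%N.
Proof.
rewrite -sum1_card (eq_bigl (fun tau : slot => xpredT (tag tau))) //.
rewrite (sum_tag_cond _ xpredT (fun _ => 1%N)).
under eq_bigr do rewrite card_ord muln1.
rewrite (eq_bigl (fun q : copy => xpredT (tag q))) // (sum_tag_cond _ xpredT k).
by apply: eq_bigr => j _; rewrite card_ord.
Qed.

Lemma fractional_encoder_separating x y i :
  (forall tau, fractional_encoder x tau = fractional_encoder y tau) ->
  (forall j, j \in A i -> x j = y j) -> x i = y i.
Proof.
move=> same_code same_side; apply/rowP => d.
have d_lt : (d < #|copies_of i|)%N.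
  by rewrite card_copies_of; apply: leq_trans (ltn_ord d) (a_cover i).
pose q := enum_val (Ordinal d_lt).
have iMq : i \in M (tag q) by have := enum_valP (Ordinal d_lt); rewrite inE.
have symbol_i z : symbol i q z = z i ord0 d.
  by rewrite /symbol /q /enum_val index_uniq ?enum_uniq -?cardE //= valK.
have symbol_out u z : u \notin M (tag q) -> symbol u q z = 0%R.
  move=> uNMq; rewrite /symbol memNindex ?mem_enum ?inE // insubF //.
  by rewrite -cardE ltnNge card_copies_of a_cover.
rewrite -(symbol_i x) -(symbol_i y); apply/eqP; rewrite -subr_eq0; apply/eqP.
apply: (G_decodable (tag q) i iMq (fun u => symbol u q x - symbol u q y)%R).
- move=> l; under eq_bigr do rewrite mulrBr; apply/eqP; rewrite sumrB subr_eq0; apply/eqP.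
  exact: (same_code (Tagged (fun q : copy => 'I_(k (tag q))) l)).
- by move=> u uA; rewrite /symbol same_side ?subrr.
- by move=> u uNMq; rewrite !symbol_out ?subrr.
Qed.

Lemma fractional_code_rate {R : realType} :
  code_rates A ((\sum_j a j * k j)%N%:R / t%:R : R)%R.
Proof.
rewrite -card_slots; apply: (code_rate_of_separating fractional_encoder t_gt0).
exact: fractional_encoder_separating.
Qed.
End FractionalCode.
End Codes.

Lemma beta_le_code_rate {R : realType} {m : nat} (A : 'I_m -> {set 'I_m}) {q : R} :
  code_rates A q -> (beta A R <= q)%R.
Proof.
move=> rate_q; apply: ge_inf rate_q.
by exists 0%R => _ [F [t [r [phi [_ _ ->]]]]]; apply: divr_ge0.
Qed.

Lemma exists_large_finField (b : nat) : exists F : finFieldType, (b <= #|F|)%N.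
Proof.
have [p b_lt_p p_prime] := prime_above b.
by exists ('F_p : finFieldType); rewrite card_Fp // ltnW.
Qed.

Lemma le_of_le_add_divSn {R : archiFieldType} (x y c : R) :
  (forall D : nat, x <= y + c / D.+1%:R)%R -> (x <= y)%R.
Proof.
move=> le_xy; apply/ler_addgt0Pr => e e_gt0.
apply: le_trans (le_xy (Num.truncn (c / e))) _; rewrite lerD2l ler_pdivrMr ?ltr0Sn //.
by rewrite mulrC -ler_pdivrMr // ltW // truncnS_gt.
Qed.

Lemma beta_le_fractional_cover {R : realType} {m n : nat} (A : 'I_m -> {set 'I_m})
    {M : 'I_n -> {set 'I_m}} (gamma : 'I_n -> R) {k : 'I_n -> nat} {F : finFieldType}
    {G : forall j, 'M[F]_(k j, m)} :
  (forall j, linear_decodable A (M j) (G j)) -> (forall j, 0 <= gamma j)%R ->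
  (forall i, 1 <= \sum_(j | i \in M j) gamma j)%R ->
  forall D : nat, (beta A R <= \sum_j gamma j * (k j)%:R + (\sum_j k j)%N%:R / D.+1%:R)%R.
Proof.
move=> G_dec gamma_ge0 gamma_cover D.
pose a j := (Num.truncn (gamma j * D.+1%:R)).+1.
have a_gt j : (gamma j * D.+1%:R < (a j)%:R)%R by apply: truncnS_gt.
have a_le j : ((a j)%:R <= gamma j * D.+1%:R + 1)%R.
  by rewrite /a -natr1 lerD2r truncn_le mulr_ge0.
have a_cover i : (D.+1 <= \sum_(j | i \in M j) a j)%N.
  rewrite -(ler_nat R) natr_sum; apply: le_trans (ler_sum _ (fun j _ => ltW (a_gt j))).
  by rewrite -mulr_suml -[X in (X <= _)%R]mul1r ler_wpM2r.
apply: le_trans (beta_le_code_rate A (fractional_code_rate A G_dec (ltn0Sn D) a_cover)) _.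
rewrite ler_pdivrMr ?ltr0Sn // mulrDl divfK ?pnatr_eq0 // !natr_sum mulr_suml -big_split.
apply: ler_sum => j _; rewrite natrM mulrAC.
by apply: le_trans (ler_wpM2r (ler0n _ _) (a_le j)) _; rewrite mulrDl mul1r.
Qed.

Theorem theorem7 (R : realType) (m : nat) (A : 'I_m -> {set 'I_m})
  (hA : forall i : 'I_m, i \notin A i)
  (n : nat) (M : 'I_n -> {set 'I_m}) (gamma : 'I_n -> R)
  (hgamma : forall j : 'I_n, (0 <= gamma j <= 1)%R)
  (hcover : forall i : 'I_m, (1 <= \sum_(j < n | i \in M j) gamma j)%R)
  (k : 'I_n -> nat)
  (hk : forall j : 'I_n, umcd_output A (M j) (k j)) :
  (beta A R <= \sum_(j < n) gamma j * (k j)%:R)%R.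
Proof.
have /fin_all_exists [bound codes] := fun j => umcd_linear_code A (M j) (k j) (hk j).
have [F F_large] := exists_large_finField (\sum_j bound j).
have /fin_all_exists [G G_dec] :
    forall j, exists G : 'M[F]_(k j, m), linear_decodable A (M j) G.
  by move=> j; apply: codes; apply: leq_trans F_large; rewrite (bigD1 j) //= leq_addr.
apply: (le_of_le_add_divSn _ _ (\sum_j k j)%N%:R).
apply: (beta_le_fractional_cover A gamma G_dec) => // j.
by case/andP: (hgamma j).
Qed.
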